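(* Let $\gamma\in\mathcal{C}\cap C^{1,1}(\mathbb{S}_1,\mathbb{R}^d)$ with $\Delta[\gamma]>0$, let $L=1$, and let $n$ be so large that $2L\Delta[\gamma]^{-1}n^{-1}\le\pi/6$. If $x=\gamma(s)$, $y=\gamma(t)$, $z=\gamma(u)$ with $s<t<u$, $|t-s|\le 2L/n$ and $|u-t|\le 2L/n$, then $$\kappa_d(x,y,z)\le\big(1+16L^2\Delta[\gamma]^{-2}n^{-2}\big)\Delta[\gamma]^{-1}.$$
   Context: $\mathbb{S}_1=\mathbb{R}/\mathbb{Z}$. $\mathcal{C}$ is the set of $\gamma\in W^{1,\infty}(\mathbb{S}_1,\mathbb{R}^d)$ with $|\gamma'|=1$ a.e.; $C^{1,1}$ means $\gamma'$ Lipschitz. For pairwise distinct $x,y,z$, $r(x,y,z)$ is the radius of the circle through $x,y,z$ ($=\infty$ if collinear), and $\Delta[\gamma]=\inf\{r(x,y,z): x,y,z\in\gamma(\mathbb{S}_1)\text{ pairwise distinct}\}$. For three points $x,y,z$ with $\phi=\measuredangle(y-x,z-y)$, $\kappa_d(x,y,z)=\frac{2\tan(\phi/2)}{(|x-y|+|z-y|)/2}$. *)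

From Stdlib Require Import Reals Lra.
Open Scope R_scope.

(* Points of R^d are encoded as functions nat -> R whose coordinates of
   index >= d vanish (see [in_Rd]). *)
Definition Vec := nat -> R.

Definition in_Rd (d : nat) (x : Vec) : Prop := forall i, (d <= i)%nat -> x i = 0.

Definition vsub (x y : Vec) : Vec := fun i => x i - y i.

Fixpoint dot (d : nat) (x y : Vec) : R :=
  match d with
  | O => 0
  | S k => dot k x y + x k * y k
  end.

Definition norm (d : nat) (x : Vec) : R := sqrt (dot d x x).

Inductive ExtR := Fin (r : R) | PInf.

Definition Rext_le (a b : ExtR) : Prop :=
  match a, b with
  | _, PInf => True
  | PInf, Fin _ => False
  | Fin x, Fin y => x <= y
  end.

Definition Rext_pos (a : ExtR) : Prop :=
  match a with Fin x => 0 < x | PInf => True end.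

Definition Rext_inv (a : ExtR) : R :=
  match a with Fin x => / x | PInf => 0 end.

(* Radius of the circle through x, y, z (+oo if collinear):
   r = |x-y| |y-z| |z-x| / (4 * area), with
   (2 * area)^2 = |y-x|^2 |z-x|^2 - ((y-x).(z-x))^2  (Gram determinant). *)
Definition gram (d : nat) (x y z : Vec) : R :=
  let a := vsub y x in let b := vsub z x in
  dot d a a * dot d b b - (dot d a b) ^ 2.

Definition circumradius (d : nat) (x y z : Vec) : ExtR :=
  if Req_EM_T (gram d x y z) 0 then PInf
  else Fin (norm d (vsub x y) * norm d (vsub y z) * norm d (vsub z x)
            / (2 * sqrt (gram d x y z))).

(* D = Delta[gamma] = inf { r(x,y,z) : x,y,z in gamma(S_1) pairwise distinct }
   (infimum in [0,+oo]). *)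
Definition is_Delta (d : nat) (gamma : R -> Vec) (D : ExtR) : Prop :=
  (forall s t u, gamma s <> gamma t -> gamma t <> gamma u -> gamma s <> gamma u ->
      Rext_le D (circumradius d (gamma s) (gamma t) (gamma u))) /\
  (forall E, (forall s t u, gamma s <> gamma t -> gamma t <> gamma u ->
                 gamma s <> gamma u ->
                 Rext_le E (circumradius d (gamma s) (gamma t) (gamma u))) ->
             Rext_le E D).

Definition angle (d : nat) (a b : Vec) : R :=
  acos (dot d a b / (norm d a * norm d b)).

Definition kappa_d (d : nat) (x y z : Vec) : R :=
  2 * tan (angle d (vsub y x) (vsub z y) / 2)
    / ((norm d (vsub x y) + norm d (vsub z y)) / 2).

(* gamma : R -> R^d, 1-periodic (i.e. a map on S_1 = R/Z), arclength
   parametrized (|gamma'| = 1) and of class C^{1,1} (gamma' Lipschitz). *)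
Definition arclength_C11_closed_curve (d : nat) (gamma : R -> Vec) : Prop :=
  (forall s, in_Rd d (gamma s)) /\
  (forall s, gamma (s + 1) = gamma s) /\
  exists gamma' : R -> Vec,
    (forall s i, derivable_pt_lim (fun t => gamma t i) s (gamma' s i)) /\
    (forall s, norm d (gamma' s) = 1) /\
    (exists K, forall s t, norm d (vsub (gamma' s) (gamma' t)) <= K * Rabs (s - t)).

(* With [lam = 1/Delta], every triple on the curve has circumradius at least [1/lam].
   Letting two of the three points merge gives a tangent version: the chord from [G sig]
   to [G tau] makes with [G' sig] an angle [phi] with [sin phi <= lam |tau - sig| / 2].
   For [|tau - sig| <= 4/n] this gives [sin phi < 1/sqrt 2], and a maximum argument shows
   that the chord points forward: [<G' sig, G tau - G sig>] has the sign of [tau - sig].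
   Hence the chords [G t - G s] and [G u - G t] both lie within [pi/4] of [G' t] on the same
   side, so their angle [phi] is at most [pi/2]. The circumradius bound for [(G s, G t, G u)]
   then reads [2 sin phi <= lam |G u - G s|]; combined with
   [tan (phi/2) = sin phi / (1 + cos phi)], [|G t - G s|, |G u - G t| <= 2/n] and
   [2 / (1 + cos phi) <= 1 + 4 sin^2 phi] (valid for [0 <= phi <= pi/2]) it gives the
   estimate on [kappa_d]. *)

From Stdlib Require Import Reals Lra Lia Classical.
Open Scope R_scope.

Ltac dot_induction d := induction d as [|d IHd]; simpl; [ring | rewrite ?IHd; ring].

Lemma dot_ge0 d x : 0 <= dot d x x.
Proof. induction d; simpl; nra. Qed.

Lemma dot_sym d x y : dot d x y = dot d y x.
Proof. dot_induction d. Qed.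

Lemma dot_ext d x x' y y' :
  (forall i, x i = x' i) -> (forall i, y i = y' i) -> dot d x y = dot d x' y'.
Proof. intros Hx Hy; induction d; simpl; [ring | rewrite IHd, Hx, Hy; ring]. Qed.

Lemma dot_scale_l d a x y : dot d (fun i => a * x i) y = a * dot d x y.
Proof. dot_induction d. Qed.

Lemma dot_scale_r d a x y : dot d x (fun i => a * y i) = a * dot d x y.
Proof. dot_induction d. Qed.

Lemma dot_opp_l d x y : dot d (fun i => - x i) y = - dot d x y.
Proof. dot_induction d. Qed.

Lemma dot_opp_r d x y : dot d x (fun i => - y i) = - dot d x y.
Proof. dot_induction d. Qed.

Lemma dot_vsub_sym d x y : dot d (vsub x y) (vsub x y) = dot d (vsub y x) (vsub y x).
Proof. unfold vsub; dot_induction d. Qed.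

Lemma dot_vsub_swap_r d w x y : dot d w (vsub x y) = - dot d w (vsub y x).
Proof. unfold vsub; dot_induction d. Qed.

Lemma dot_vsub_diag_r d w x : dot d w (vsub x x) = 0.
Proof. unfold vsub; dot_induction d. Qed.

Lemma dot_vsub_diag_l d w x : dot d (vsub x x) w = 0.
Proof. rewrite dot_sym; apply dot_vsub_diag_r. Qed.

Lemma dot_vsub_split_l d x y z w :
  dot d (vsub z x) w = dot d (vsub y x) w + dot d (vsub z y) w.
Proof. unfold vsub; dot_induction d. Qed.

Lemma dot_vsub_split_r d x y z w :
  dot d w (vsub z x) = dot d w (vsub y x) + dot d w (vsub z y).
Proof. unfold vsub; dot_induction d. Qed.

Lemma dot_comb_self d a b x y :
  dot d (fun i => a * x i + b * y i) (fun i => a * x i + b * y i)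
  = a * a * dot d x x + 2 * a * b * dot d x y + b * b * dot d y y.
Proof. dot_induction d. Qed.

Lemma dot_sub_sub d a b x y e :
  dot d (fun i => x i - a * e i) (fun i => y i - b * e i)
  = dot d x y - b * dot d x e - a * dot d e y + a * b * dot d e e.
Proof. dot_induction d. Qed.

Lemma cauchy_schwarz d x y : (dot d x y) ^ 2 <= dot d x x * dot d y y.
Proof.
  assert (comb : forall a b,
    0 <= a * a * dot d x x + 2 * a * b * dot d x y + b * b * dot d y y)
    by (intros; rewrite <- dot_comb_self; apply dot_ge0).
  pose proof (dot_ge0 d x) as HX; pose proof (dot_ge0 d y) as HY.
  set (X := dot d x x) in *; set (Y := dot d y y) in *; set (P := dot d x y) in *.
  pose proof (comb Y (- P)); pose proof (comb P (- X)).
  pose proof (comb 1 1); pose proof (comb 1 (-1)).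
  destruct HY as [HY | HY]; [| destruct HX as [HX | HX]]; [nra | nra |].
  subst X Y; rewrite <- HX, <- HY in *; nra.
Qed.

Lemma dot_sub2_self d a b w e f :
  dot d (fun i => w i - a * e i - b * f i) (fun i => w i - a * e i - b * f i)
  = dot d w w - 2 * a * dot d e w - 2 * b * dot d f w
    + a * a * dot d e e + b * b * dot d f f + 2 * a * b * dot d e f.
Proof. dot_induction d. Qed.

Lemma bessel2 d e f w :
  dot d e e = 1 -> dot d f f = 1 -> dot d e f = 0 ->
  (dot d e w) ^ 2 + (dot d f w) ^ 2 <= dot d w w.
Proof.
  intros He Hf Hef.
  pose proof (dot_ge0 d (fun i => w i - dot d e w * e i - dot d f w * f i)) as H.
  rewrite dot_sub2_self, He, Hf, Hef in H; nra.
Qed.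

Lemma gram_eq d x y z : gram d x y z =
  dot d (vsub y x) (vsub y x) * dot d (vsub z y) (vsub z y)
  - (dot d (vsub y x) (vsub z y)) ^ 2.
Proof.
  unfold gram.
  rewrite (dot_vsub_split_l d x y z), !(dot_vsub_split_r d x y z),
    (dot_sym d (vsub z y) (vsub y x)).
  ring.
Qed.

Lemma dot_vsub_chain d x y z : dot d (vsub z x) (vsub z x) =
  dot d (vsub y x) (vsub y x) + 2 * dot d (vsub y x) (vsub z y) + dot d (vsub z y) (vsub z y).
Proof.
  rewrite (dot_vsub_split_l d x y z), !(dot_vsub_split_r d x y z),
    (dot_sym d (vsub z y) (vsub y x)).
  ring.
Qed.

Lemma gram_degenerate d x y z : x = y \/ y = z \/ z = x -> gram d x y z = 0.
Proof.
  unfold gram; intros [<- | [<- | <-]];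
    rewrite ?dot_vsub_diag_l, ?dot_vsub_diag_r; ring.
Qed.

(* [r(x,y,z) >= 1/lam] for all triples on [G], in the square-root free form
   [4 gram <= lam^2 |x-y|^2 |y-z|^2 |z-x|^2] of [r = |x-y||y-z||z-x| / (2 sqrt gram)]. *)
Definition thick (d : nat) (G : R -> Vec) (lam : R) : Prop := forall a b c,
  4 * gram d (G a) (G b) (G c) <=
  lam ^ 2 * dot d (vsub (G a) (G b)) (vsub (G a) (G b))
    * dot d (vsub (G b) (G c)) (vsub (G b) (G c))
    * dot d (vsub (G c) (G a)) (vsub (G c) (G a)).

Lemma gram_le_of_circumradius d D x y z :
  Rext_pos D -> Rext_le D (circumradius d x y z) ->
  4 * gram d x y z <= (Rext_inv D) ^ 2 * dot d (vsub x y) (vsub x y)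
    * dot d (vsub y z) (vsub y z) * dot d (vsub z x) (vsub z x).
Proof.
  intros HD Hr.
  set (N1 := dot d (vsub x y) (vsub x y)); set (N2 := dot d (vsub y z) (vsub y z));
    set (N3 := dot d (vsub z x) (vsub z x)).
  assert (N_ge0 : 0 <= N1 * N2 * N3)
    by (repeat apply Rmult_le_pos; apply dot_ge0).
  assert (rhs_ge0 : 0 <= (Rext_inv D) ^ 2 * N1 * N2 * N3)
    by (rewrite !Rmult_assoc; apply Rmult_le_pos; [apply pow2_ge_0 | lra]).
  destruct (Rle_lt_dec (gram d x y z) 0) as [gram_le0 | gram_pos]; [lra |].
  unfold circumradius in Hr.
  destruct (Req_EM_T (gram d x y z) 0) as [gram0 | _]; [lra |].
  destruct D as [r |]; [| contradiction]; simpl in HD, Hr; change (Rext_inv (Fin r)) with (/ r).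
  unfold norm in Hr; fold N1 N2 N3 in Hr.
  set (g := gram d x y z) in *.
  assert (sg : 0 < sqrt g) by (apply sqrt_lt_R0; lra).
  assert (Hr' : r * (2 * sqrt g) <= sqrt N1 * sqrt N2 * sqrt N3).
  { apply (Rmult_le_compat_r (2 * sqrt g)) in Hr; [| lra].
    unfold Rdiv in Hr; rewrite Rmult_assoc, Rinv_l, Rmult_1_r in Hr; lra. }
  assert (Hr2 : (r * (2 * sqrt g)) ^ 2 <= (sqrt N1 * sqrt N2 * sqrt N3) ^ 2)
    by (apply pow_incr; split; [apply Rmult_le_pos |]; lra).
  rewrite !Rpow_mult_distr, !pow2_sqrt in Hr2 by first [apply dot_ge0 | lra].
  apply (Rmult_le_reg_r (r ^ 2)); [apply pow_lt; lra |].
  replace ((/ r) ^ 2 * N1 * N2 * N3 * r ^ 2) with (N1 * N2 * N3) by (field; lra).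
  nra.
Qed.

Lemma thick_of_Delta d G D : is_Delta d G D -> Rext_pos D -> thick d G (Rext_inv D).
Proof.
  intros [HD _] Dpos a b c.
  destruct (classic (G a = G b \/ G b = G c \/ G c = G a)) as [deg | nondeg].
  - rewrite gram_degenerate by exact deg.
    assert (0 <= dot d (vsub (G a) (G b)) (vsub (G a) (G b))
      * dot d (vsub (G b) (G c)) (vsub (G b) (G c))
      * dot d (vsub (G c) (G a)) (vsub (G c) (G a)))
      by (repeat apply Rmult_le_pos; apply dot_ge0).
    pose proof (pow2_ge_0 (Rext_inv D)); nra.
  - apply gram_le_of_circumradius; [exact Dpos |].
    apply HD; intro E; apply nondeg; auto.
Qed.

Lemma Un_cv_const c : Un_cv (fun _ => c) c.
Proof. intros eps Heps; exists 0%nat; intros; rewrite R_dist_eq; lra. Qed.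

Lemma Un_cv_inv_S : Un_cv (fun k => / INR (S k)) 0.
Proof.
  intros eps Heps.
  destruct (archimed_cor1 eps Heps) as [N [HN N_pos]].
  exists N; intros k Hk; unfold R_dist.
  rewrite Rminus_0_r, Rabs_right
    by (apply Rle_ge, Rlt_le, Rinv_0_lt_compat, lt_0_INR; lia).
  apply Rle_lt_trans with (/ INR N); [| exact HN].
  apply Rinv_le_contravar; [apply lt_0_INR; lia | apply le_INR; lia].
Qed.

Lemma Un_cv_dot d (x y : nat -> Vec) (X Y : Vec) :
  (forall i, Un_cv (fun k => x k i) (X i)) ->
  (forall i, Un_cv (fun k => y k i) (Y i)) ->
  Un_cv (fun k => dot d (x k) (y k)) (dot d X Y).
Proof.
  intros Hx Hy; induction d; simpl.
  - apply Un_cv_const.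
  - apply CV_plus; [exact IHd | apply CV_mult; auto].
Qed.

Definition dquot (G : R -> Vec) (s h : R) : Vec := fun i => (G (s + h) i - G s i) / h.

Lemma Un_cv_dquot (G G' : R -> Vec) s i :
  derivable_pt_lim (fun t => G t i) s (G' s i) ->
  Un_cv (fun k => dquot G s (/ INR (S k)) i) (G' s i).
Proof.
  intros HG eps Heps.
  destruct (HG eps Heps) as [del Hdel].
  destruct (Un_cv_inv_S del (cond_pos del)) as [N HN].
  exists N; intros k Hk; apply Hdel.
  - apply Rgt_not_eq, Rinv_0_lt_compat, lt_0_INR; lia.
  - specialize (HN k Hk); unfold R_dist in HN; rewrite Rminus_0_r in HN; exact HN.
Qed.

Lemma derivable_pt_lim_pos_right f x l y :
  derivable_pt_lim f x l -> 0 < l -> x < y -> exists z, x < z < y /\ f x < f z.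
Proof.
  intros Hf Hl Hxy.
  destruct (Hf l Hl) as [del Hdel].
  pose proof (cond_pos del) as del_pos.
  set (h := Rmin (del / 2) ((y - x) / 2)).
  assert (h_pos : 0 < h) by (apply Rmin_pos; lra).
  assert (h_del : h < del) by (unfold h; pose proof (Rmin_l (del / 2) ((y - x) / 2)); lra).
  assert (h_y : h < y - x) by (unfold h; pose proof (Rmin_r (del / 2) ((y - x) / 2)); lra).
  specialize (Hdel h ltac:(lra) ltac:(rewrite Rabs_right; lra)).
  apply Rabs_def2 in Hdel.
  exists (x + h); split; [lra |].
  assert (0 < h * ((f (x + h) - f x) / h)) by (apply Rmult_lt_0_compat; lra).
  replace (h * ((f (x + h) - f x) / h)) with (f (x + h) - f x) in * by (field; lra).
  lra.
Qed.

(* By Bessel, the two angle conditions add up to [4 |v|^2 <= 2 k |v|^2]. *)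
Lemma orthogonal_tangents_chord_zero d e f v k :
  dot d e e = 1 -> dot d f f = 1 -> dot d e f = 0 -> k < 2 ->
  4 * (dot d v v - (dot d e v) ^ 2) <= k * dot d v v ->
  4 * (dot d v v - (dot d f v) ^ 2) <= k * dot d v v ->
  dot d v v = 0.
Proof.
  intros He Hf Hef Hk Hev Hfv.
  pose proof (bessel2 d e f v He Hf Hef); pose proof (dot_ge0 d v); nra.
Qed.

(* Both chords make an angle [< pi/4] with [e], so their angle is [< pi/2]; this is
   Cauchy-Schwarz for their components orthogonal to [e]. *)
Lemma chords_dot_ge0 d e v1 v2 k :
  dot d e e = 1 -> 0 < dot d e v1 -> 0 < dot d e v2 -> k < 2 ->
  4 * (dot d v1 v1 - (dot d e v1) ^ 2) <= k * dot d v1 v1 ->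
  4 * (dot d v2 v2 - (dot d e v2) ^ 2) <= k * dot d v2 v2 ->
  0 <= dot d v1 v2.
Proof.
  intros He H1 H2 Hk S1 S2.
  set (a1 := dot d e v1) in *; set (a2 := dot d e v2) in *.
  pose proof (cauchy_schwarz d (fun i => v1 i - a1 * e i) (fun i => v2 i - a2 * e i)) as C.
  rewrite !dot_sub_sub, He, (dot_sym d v1 e), (dot_sym d v2 e) in C; fold a1 a2 in C.
  pose proof (cauchy_schwarz d e v1) as C1; pose proof (cauchy_schwarz d e v2) as C2.
  rewrite He in C1, C2; fold a1 a2 in C1, C2.
  set (V1 := dot d v1 v1) in *; set (V2 := dot d v2 v2) in *; set (p := dot d v1 v2) in *.
  assert (perp1 : 0 <= V1 - a1 ^ 2 < a1 ^ 2) by (pose proof (pow_lt a1 2 H1); nra).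
  assert (perp2 : 0 <= V2 - a2 ^ 2 < a2 ^ 2) by (pose proof (pow_lt a2 2 H2); nra).
  assert ((V1 - a1 ^ 2) * (V2 - a2 ^ 2) < a1 ^ 2 * a2 ^ 2)
    by (apply Rmult_le_0_lt_compat; lra).
  assert (0 < a1 * a2) by (apply Rmult_lt_0_compat; lra).
  nra.
Qed.

Lemma derivable_pt_lim_dot_chord d (G G' : R -> Vec) v c tau :
  (forall s i, derivable_pt_lim (fun t => G t i) s (G' s i)) ->
  derivable_pt_lim (fun r => dot d v (vsub (G r) c)) tau (dot d v (G' tau)).
Proof.
  intros G_deriv; induction d as [| k IHk]; simpl.
  - apply derivable_pt_lim_const.
  - replace (dot k v (G' tau) + v k * G' tau k)
      with (dot k v (G' tau) + v k * (G' tau k - 0)) by ring.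
    apply (derivable_pt_lim_plus (fun r => dot k v (vsub (G r) c))
             (fun r => v k * vsub (G r) c k)); [exact IHk |].
    apply (derivable_pt_lim_scal (fun r => vsub (G r) c k)).
    apply (derivable_pt_lim_minus (fun r => G r k) (fct_cte (c k))).
    + apply G_deriv.
    + apply derivable_pt_lim_const.
Qed.

Section UnitSpeedCurve.

Variables (d : nat) (G G' : R -> Vec) (lam : R).
Hypothesis G_deriv : forall s i, derivable_pt_lim (fun t => G t i) s (G' s i).
Hypothesis G'_unit : forall s, dot d (G' s) (G' s) = 1.
Hypothesis G_thick : thick d G lam.

(* Mean value theorem for [r |-> <v, G r - G a>] with [v := G b - G a]. *)
Lemma chord_le_lt a b : a < b ->
  dot d (vsub (G b) (G a)) (vsub (G b) (G a)) <= (b - a) ^ 2.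
Proof.
  intros Hab.
  set (v := vsub (G b) (G a)).
  destruct (MVT_cor2 (fun r => dot d v (vsub (G r) (G a))) (fun r => dot d v (G' r)) a b Hab)
    as [c [Hc _]]; [intros; apply derivable_pt_lim_dot_chord, G_deriv |].
  rewrite dot_vsub_diag_r, Rminus_0_r in Hc; fold v in Hc.
  pose proof (cauchy_schwarz d v (G' c)) as CS; rewrite G'_unit, Rmult_1_r in CS.
  pose proof (dot_ge0 d v).
  set (W := dot d v v) in *; set (g := dot d v (G' c)) in *.
  assert (W * W <= W * (b - a) ^ 2).
  { replace (W * W) with (g ^ 2 * (b - a) ^ 2) by (rewrite Hc; ring).
    apply Rmult_le_compat_r; [apply pow2_ge_0 | exact CS]. }
  destruct H as [W_pos | <-]; [apply (Rmult_le_reg_l W); lra | apply pow2_ge_0].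
Qed.

Lemma chord_le a b : dot d (vsub (G b) (G a)) (vsub (G b) (G a)) <= (b - a) ^ 2.
Proof.
  destruct (Rtotal_order a b) as [Hab | [<- | Hba]].
  - now apply chord_le_lt.
  - rewrite dot_vsub_diag_r; nra.
  - rewrite dot_vsub_sym; replace ((b - a) ^ 2) with ((a - b) ^ 2) by ring.
    now apply chord_le_lt.
Qed.

Lemma norm_chord_le a b : a <= b -> norm d (vsub (G b) (G a)) <= b - a.
Proof.
  intros Hab; unfold norm.
  rewrite <- (sqrt_pow2 (b - a)) by lra.
  apply sqrt_le_1_alt, chord_le.
Qed.

Lemma thick_dquot sig tau h : 0 < h ->
  4 * (dot d (dquot G sig h) (dquot G sig h)
         * dot d (vsub (G tau) (G sig)) (vsub (G tau) (G sig))
       - (dot d (dquot G sig h) (vsub (G tau) (G sig))) ^ 2)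
  <= lam ^ 2 * dot d (dquot G sig h) (dquot G sig h) * (sig + h - tau) ^ 2
       * dot d (vsub (G tau) (G sig)) (vsub (G tau) (G sig)).
Proof.
  intros h_pos.
  set (a := dquot G sig h); set (w := vsub (G tau) (G sig)).
  assert (Ha : forall i, vsub (G (sig + h)) (G sig) i = h * a i)
    by (intros; unfold vsub, a, dquot; field; lra).
  pose proof (G_thick sig (sig + h) tau) as K.
  unfold gram in K; rewrite (dot_vsub_sym d (G sig)) in K.
  fold w in K.
  rewrite !(dot_ext d _ _ _ _ Ha Ha), (dot_ext d _ _ w w Ha (fun _ => eq_refl)),
    !dot_scale_l, !dot_scale_r in K.
  pose proof (chord_le tau (sig + h)) as Cb.
  pose proof (dot_ge0 d a); pose proof (dot_ge0 d w); pose proof (pow2_ge_0 lam).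
  assert (0 <= lam ^ 2 * dot d a a * dot d w w)
    by (apply Rmult_le_pos; [apply Rmult_le_pos |]; assumption).
  assert (0 <= h * h * (lam ^ 2 * dot d a a * dot d w w)) by (apply Rmult_le_pos; nra).
  apply (Rmult_le_reg_l (h * h)); [nra |].
  nra.
Qed.

(* Let [G (sig + h)] merge into [G sig] in [thick_dquot]. *)
Lemma chord_tangent_le_dist sig tau :
  4 * (dot d (vsub (G tau) (G sig)) (vsub (G tau) (G sig))
       - (dot d (G' sig) (vsub (G tau) (G sig))) ^ 2)
  <= lam ^ 2 * (tau - sig) ^ 2 * dot d (vsub (G tau) (G sig)) (vsub (G tau) (G sig)).
Proof.
  set (w := vsub (G tau) (G sig)); set (W := dot d w w); set (e := G' sig).
  set (a := fun k => dquot G sig (/ INR (S k))).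
  assert (Ha : forall i, Un_cv (fun k => a k i) (e i))
    by (intros; apply Un_cv_dquot, G_deriv).
  assert (Hw : forall i, Un_cv (fun _ => w i) (w i)) by (intros; apply Un_cv_const).
  assert (Haa := Un_cv_dot d a a e e Ha Ha).
  assert (Haw := Un_cv_dot d a (fun _ => w) e w Ha Hw).
  unfold e in Haa; rewrite G'_unit in Haa; fold e in Haw.
  assert (Hdist : Un_cv (fun k => sig + / INR (S k) - tau) (sig + 0 - tau))
    by (apply CV_minus; [apply CV_plus; [apply Un_cv_const | apply Un_cv_inv_S] |];
        apply Un_cv_const).
  apply Rle_cv_lim with
    (Un := fun k => 4 * (dot d (a k) (a k) * W - dot d (a k) w * (dot d (a k) w * 1)))
    (Vn := fun k => lam ^ 2 * dot d (a k) (a k)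
                    * ((sig + / INR (S k) - tau) * ((sig + / INR (S k) - tau) * 1)) * W).
  - intros k; apply thick_dquot, Rinv_0_lt_compat, lt_0_INR; lia.
  - replace (4 * (W - dot d e w ^ 2)) with (4 * (1 * W - dot d e w * (dot d e w * 1))) by ring.
    repeat apply CV_mult || apply CV_minus; auto using Un_cv_const.
  - replace (lam ^ 2 * (tau - sig) ^ 2 * W)
      with (lam ^ 2 * 1 * ((sig + 0 - tau) * ((sig + 0 - tau) * 1)) * W) by ring.
    repeat apply CV_mult; auto using Un_cv_const.
Qed.

Lemma chord_tangent_le r sig tau : Rabs (tau - sig) <= r ->
  4 * (dot d (vsub (G tau) (G sig)) (vsub (G tau) (G sig))
       - (dot d (G' sig) (vsub (G tau) (G sig))) ^ 2)
  <= lam ^ 2 * r ^ 2 * dot d (vsub (G tau) (G sig)) (vsub (G tau) (G sig)).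
Proof.
  intros Hr.
  pose proof (chord_tangent_le_dist sig tau) as T.
  pose proof (dot_ge0 d (vsub (G tau) (G sig))); pose proof (pow2_ge_0 lam).
  assert ((tau - sig) ^ 2 <= r ^ 2)
    by (rewrite <- pow2_abs; apply pow_incr; split; [apply Rabs_pos | exact Hr]).
  assert (lam ^ 2 * (tau - sig) ^ 2 <= lam ^ 2 * r ^ 2) by (apply Rmult_le_compat_l; lra).
  nra.
Qed.

(* If the chord turned back, [r |-> <G' sig, G r - G sig>] would have an interior
   maximum [M], where [G' M] is orthogonal to [G' sig] while both tangents are close
   to the chord [G M - G sig]. *)
Lemma chord_ahead_pos r sig tau : lam ^ 2 * r ^ 2 < 2 -> sig < tau -> tau <= sig + r ->
  0 < dot d (G' sig) (vsub (G tau) (G sig)).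
Proof.
  intros Hk H1 H2.
  set (e := G' sig); set (g := fun r => dot d e (vsub (G r) (G sig))).
  assert (g_deriv : forall r, derivable_pt_lim g r (dot d e (G' r)))
    by (intros; apply derivable_pt_lim_dot_chord, G_deriv).
  assert (g0 : g sig = 0) by apply dot_vsub_diag_r.
  change (0 < g tau).
  destruct (Rlt_le_dec 0 (g tau)) as [ok | g_tau]; [exact ok | exfalso].
  destruct (derivable_pt_lim_pos_right g sig 1 tau) as [z [Hz g_z]]; [| lra | exact H1 |].
  { specialize (g_deriv sig); unfold e in g_deriv; rewrite G'_unit in g_deriv; exact g_deriv. }
  destruct (continuity_ab_maj g sig tau) as [M [HM [HM1 HM2]]]; [lra | |].
  { intros c _; apply derivable_continuous_pt; exact (exist _ _ (g_deriv c)). }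
  pose proof (HM z ltac:(lra)) as g_M.
  assert (M_in : sig < M < tau)
    by (split; [destruct (Req_dec M sig) as [-> |] | destruct (Req_dec M tau) as [-> |]]; lra).
  assert (orth : dot d e (G' M) = 0).
  { exact (deriv_maximum g sig tau M (exist _ _ (g_deriv M)) (proj1 M_in) (proj2 M_in)
             (fun x Hx1 Hx2 => HM x (conj (Rlt_le _ _ Hx1) (Rlt_le _ _ Hx2)))). }
  set (v := vsub (G M) (G sig)).
  assert (Hv0 : dot d v v = 0).
  { apply (orthogonal_tangents_chord_zero d e (G' M) v (lam ^ 2 * r ^ 2));
      [apply G'_unit | apply G'_unit | exact orth | exact Hk | |].
    - apply chord_tangent_le; rewrite Rabs_right; lra.
    - pose proof (chord_tangent_le r M sig ltac:(rewrite Rabs_left; lra)) as S.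
      rewrite (dot_vsub_sym d (G sig)), (dot_vsub_swap_r d (G' M) (G sig)) in S; fold v in S.
      replace ((- dot d (G' M) v) ^ 2) with ((dot d (G' M) v) ^ 2) in S by ring.
      exact S. }
  pose proof (cauchy_schwarz d e v) as CS.
  unfold e in CS at 2; rewrite G'_unit, Hv0 in CS.
  change (dot d e v) with (g M) in CS.
  nra.
Qed.

End UnitSpeedCurve.

Lemma chord_behind_neg d (G G' : R -> Vec) lam r sig tau :
  (forall s i, derivable_pt_lim (fun t => G t i) s (G' s i)) ->
  (forall s, dot d (G' s) (G' s) = 1) ->
  thick d G lam -> lam ^ 2 * r ^ 2 < 2 -> tau < sig -> sig - r <= tau ->
  dot d (G' sig) (vsub (G tau) (G sig)) < 0.
Proof.
  intros G_deriv G'_unit G_thick Hk H1 H2.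
  set (G2 := fun r => G (- r)); set (G2' := fun r i => - G' (- r) i).
  assert (G2_deriv : forall s i, derivable_pt_lim (fun t => G2 t i) s (G2' s i)).
  { intros s i; unfold G2, G2'.
    replace (- G' (- s) i) with (G' (- s) i * (-1)) by ring.
    apply (derivable_pt_lim_comp (opp_fct id) (fun t => G t i)); [| apply G_deriv].
    apply derivable_pt_lim_opp, derivable_pt_lim_id. }
  assert (G2'_unit : forall s, dot d (G2' s) (G2' s) = 1)
    by (intros; unfold G2'; rewrite dot_opp_l, dot_opp_r, G'_unit; ring).
  assert (G2_thick : thick d G2 lam) by (intros a b c; apply G_thick).
  pose proof (chord_ahead_pos d G2 G2' lam G2_deriv G2'_unit G2_thick r (- sig) (- tau)
                Hk ltac:(lra) ltac:(lra)) as F.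
  unfold G2, G2' in F; rewrite !Ropp_involutive, dot_opp_l in F; lra.
Qed.

Lemma tan_half_acos c : -1 < c <= 1 -> tan (acos c / 2) * (1 + c) = sqrt (1 - c²).
Proof.
  intros Hc.
  set (th := acos c / 2).
  assert (Hcos : cos (2 * th) = c) by (unfold th; rewrite Rmult_div_assoc, Rmult_div_r by lra;
                                        apply cos_acos; lra).
  assert (Hsin : sin (2 * th) = sqrt (1 - c²))
    by (unfold th; rewrite Rmult_div_assoc, Rmult_div_r by lra; apply sin_acos; lra).
  rewrite cos_2a_cos in Hcos; rewrite sin_2a in Hsin.
  assert (cos th <> 0) by (intro E; rewrite E in Hcos; lra).
  unfold tan; rewrite <- Hsin, <- Hcos; field; assumption.
Qed.

Lemma half_angle_curvature_le A B c lam eps :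
  0 < A -> 0 < B -> 0 <= c <= 1 -> 0 <= lam ->
  4 * (1 - c ^ 2) <= lam ^ 2 * (A ^ 2 + 2 * c * A * B + B ^ 2) ->
  lam ^ 2 * (A + B) ^ 2 <= eps ->
  2 * tan (acos c / 2) / ((A + B) / 2) <= (1 + eps) * lam.
Proof.
  intros HA HB Hc Hlam Hgram Heps.
  assert (HT : tan (acos c / 2) = sqrt (1 - c²) / (1 + c))
    by (rewrite <- (tan_half_acos c) by lra; field; lra).
  set (s := sqrt (1 - c²)) in HT.
  assert (Hs2 : s ^ 2 = 1 - c ^ 2) by (unfold s, Rsqr; rewrite pow2_sqrt; nra).
  assert (Hs0 : 0 <= s) by apply sqrt_pos.
  assert (sin_le : 4 * (1 - c ^ 2) <= lam ^ 2 * (A + B) ^ 2).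
  { assert (lam ^ 2 * (A ^ 2 + 2 * c * A * B + B ^ 2) <= lam ^ 2 * (A + B) ^ 2)
      by (apply Rmult_le_compat_l; [apply pow2_ge_0 |];
          assert (0 <= (1 - c) * (A * B)) by (apply Rmult_le_pos; nra); nra).
    lra. }
  assert (two_s_le : 2 * s <= lam * (A + B))
    by (assert (0 <= lam * (A + B)) by nra; nra).
  (* [2 / (1 + c) <= 1 + 4 (1 - c^2)], from [(1 - c) (4 c^2 + 8 c + 3) >= 0]. *)
  assert (two_le : 2 <= (1 + eps) * (1 + c))
    by (assert (0 <= (1 - c) * (4 * c * c + 8 * c + 3)) by (apply Rmult_le_pos; nra); nra).
  rewrite HT.
  apply (Rmult_le_reg_r ((1 + c) * (A + B))); [nra |].
  replace (2 * (s / (1 + c)) / ((A + B) / 2) * ((1 + c) * (A + B))) with (4 * s) by (field; lra).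
  nra.
Qed.

Lemma kappa_d_le_of_gram d x y z lam eps :
  0 < dot d (vsub y x) (vsub y x) -> 0 < dot d (vsub z y) (vsub z y) ->
  0 <= dot d (vsub y x) (vsub z y) -> 0 <= lam ->
  4 * gram d x y z <= lam ^ 2 * dot d (vsub x y) (vsub x y)
    * dot d (vsub y z) (vsub y z) * dot d (vsub z x) (vsub z x) ->
  lam ^ 2 * (norm d (vsub y x) + norm d (vsub z y)) ^ 2 <= eps ->
  kappa_d d x y z <= (1 + eps) * lam.
Proof.
  intros HV1 HV2 Hp Hlam Hgram Heps.
  unfold kappa_d, angle, norm in *.
  rewrite (dot_vsub_sym d x y) in Hgram |- *.
  rewrite (dot_vsub_sym d y z), gram_eq, (dot_vsub_chain d x y z) in Hgram.
  pose proof (cauchy_schwarz d (vsub y x) (vsub z y)) as CS.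
  set (V1 := dot d (vsub y x) (vsub y x)) in *; set (V2 := dot d (vsub z y) (vsub z y)) in *;
    set (p := dot d (vsub y x) (vsub z y)) in *.
  set (A := sqrt V1) in *; set (B := sqrt V2) in *.
  assert (HA : 0 < A) by (apply sqrt_lt_R0; lra).
  assert (HB : 0 < B) by (apply sqrt_lt_R0; lra).
  assert (HA2 : V1 = A ^ 2) by (unfold A; rewrite pow2_sqrt; lra).
  assert (HB2 : V2 = B ^ 2) by (unfold B; rewrite pow2_sqrt; lra).
  set (c := p / (A * B)).
  assert (Hpc : p = c * (A * B)) by (unfold c; field; lra).
  assert (HAB : 0 < A * B) by nra.
  rewrite HA2, HB2, Hpc in Hgram, CS.
  apply half_angle_curvature_le; try assumption.
  - assert (c ^ 2 <= 1) by (apply (Rmult_le_reg_r ((A * B) ^ 2)); [nra | lra]).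
    split; [apply Rle_mult_inv_pos; lra | nra].
  - apply (Rmult_le_reg_r ((A * B) ^ 2)); [nra |]; nra.
Qed.

Lemma dot_self_pos_of_dot_pos d e v : dot d e e = 1 -> 0 < dot d e v -> 0 < dot d v v.
Proof.
  intros He Hv; pose proof (cauchy_schwarz d e v) as CS; rewrite He in CS.
  pose proof (pow_lt _ 2 Hv); lra.
Qed.

Lemma kappa_d_le_of_close d (G G' : R -> Vec) lam r s t u :
  (forall s i, derivable_pt_lim (fun t => G t i) s (G' s i)) ->
  (forall s, dot d (G' s) (G' s) = 1) ->
  thick d G lam -> 0 <= lam -> lam ^ 2 * r ^ 2 < 2 ->
  s < t -> t < u -> t - s <= r / 2 -> u - t <= r / 2 ->
  kappa_d d (G s) (G t) (G u) <= (1 + lam ^ 2 * r ^ 2) * lam.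
Proof.
  intros G_deriv G'_unit G_thick Hlam Hk Hst Htu Hts Hut.
  pose proof (chord_behind_neg d G G' lam r t s G_deriv G'_unit G_thick Hk Hst ltac:(lra)) as a1.
  pose proof (chord_ahead_pos d G G' lam G_deriv G'_unit G_thick r t u Hk Htu ltac:(lra)) as a2.
  pose proof (chord_tangent_le d G G' lam G_deriv G'_unit G_thick r t s
                ltac:(rewrite Rabs_left; lra)) as S1.
  pose proof (chord_tangent_le d G G' lam G_deriv G'_unit G_thick r t u
                ltac:(rewrite Rabs_right; lra)) as S2.
  rewrite (dot_vsub_swap_r d (G' t)) in a1, S1; rewrite (dot_vsub_sym d (G s)) in S1.
  replace ((- dot d (G' t) (vsub (G t) (G s))) ^ 2)
    with ((dot d (G' t) (vsub (G t) (G s))) ^ 2) in S1 by ring.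
  apply kappa_d_le_of_gram.
  - apply (dot_self_pos_of_dot_pos d (G' t)); [apply G'_unit | lra].
  - apply (dot_self_pos_of_dot_pos d (G' t)); [apply G'_unit | exact a2].
  - apply (chords_dot_ge0 d (G' t) _ _ (lam ^ 2 * r ^ 2)); auto; lra.
  - exact Hlam.
  - apply G_thick.
  - pose proof (norm_chord_le d G G' G_deriv G'_unit s t ltac:(lra)).
    pose proof (norm_chord_le d G G' G_deriv G'_unit t u ltac:(lra)).
    pose proof (sqrt_pos (dot d (vsub (G t) (G s)) (vsub (G t) (G s)))).
    pose proof (sqrt_pos (dot d (vsub (G u) (G t)) (vsub (G u) (G t)))).
    unfold norm in *.
    apply Rmult_le_compat_l; [apply pow2_ge_0 | apply pow_incr; lra].
Qed.

Theorem mainTheorem16 (d : nat) (gamma : R -> Vec) (D : ExtR) (n : nat)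
  (s t u : R) :
  arclength_C11_closed_curve d gamma ->
  is_Delta d gamma D ->
  Rext_pos D ->
  (0 < n)%nat ->
  2 * 1 * Rext_inv D * / INR n <= PI / 6 ->
  s < t -> t < u ->
  Rabs (t - s) <= 2 * 1 / INR n ->
  Rabs (u - t) <= 2 * 1 / INR n ->
  kappa_d d (gamma s) (gamma t) (gamma u)
    <= (1 + 16 * 1 ^ 2 * Rext_inv D ^ 2 * / INR n ^ 2) * Rext_inv D.
Proof.
  intros [_ [_ [gamma' [gamma_deriv [gamma'_norm _]]]]] HDelta Dpos n_pos Hsmall Hst Htu Hts Hut.
  assert (gamma'_unit : forall r, dot d (gamma' r) (gamma' r) = 1)
    by (intros r; rewrite <- (pow2_sqrt (dot d (gamma' r) (gamma' r))) by apply dot_ge0;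
        unfold norm in gamma'_norm; rewrite gamma'_norm; ring).
  assert (Hn : 0 < INR n) by (apply lt_0_INR; lia).
  assert (lam_ge0 : 0 <= Rext_inv D)
    by (destruct D; simpl in *; [apply Rlt_le, Rinv_0_lt_compat |]; lra).
  set (lam := Rext_inv D) in *.
  (* [PI <= 4] turns the hypothesis into [lam / n <= 1/3]. *)
  assert (lam_n : lam * / INR n <= 1 / 3) by (pose proof PI_4; lra).
  replace (16 * 1 ^ 2 * lam ^ 2 * / INR n ^ 2) with (lam ^ 2 * (4 / INR n) ^ 2)
    by (field; lra).
  rewrite Rabs_right in Hts, Hut by lra.
  apply (kappa_d_le_of_close d gamma gamma'); try assumption.
  - apply thick_of_Delta; assumption.
  - replace (lam ^ 2 * (4 / INR n) ^ 2) with (16 * (lam * / INR n) ^ 2) by (field; lra).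
    assert (0 <= lam * / INR n) by (apply Rle_mult_inv_pos; lra).
    nra.
  - replace (4 / INR n / 2) with (2 * 1 / INR n) by (field; lra); exact Hts.
  - replace (4 / INR n / 2) with (2 * 1 / INR n) by (field; lra); exact Hut.
Qed.
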